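(* Assume the well-calibration assumption: with probability at least $1-\delta$, $\Phi^*\in\bigcap_{n\ge0}\mathcal{M}_n$. Then with probability at least $1-\delta$, for all $n\ge1$, $$V_{\pi^*,\Phi^*}(\mathbf{x}_0,T)-V_{\pi_n,\Phi^*}(\mathbf{x}_0,T)\le\mathbb{E}_{\pi_n,\Phi^*}\Big[\sum_{k\ge0}V_{\pi_n,\Phi_n}(\widehat{\mathbf{x}}_{n,k+1},t_{n,k+1})-V_{\pi_n,\Phi_n}(\mathbf{x}_{n,k+1},t_{n,k+1})\Big],$$ where $(\mathbf{s}_{n,k})_k$ is the trajectory generated by $\pi_n$ on the true dynamics $\Phi^*$, $\mathbf{x}_{n,k+1}$ is the state component of $\Psi_{\Phi^*}(\mathbf{s}_{n,k},\pi_n(\mathbf{s}_{n,k}),\mathbf{w}_{n,k})$ and $\widehat{\mathbf{x}}_{n,k+1}$ is the state component of $\Psi_{\Phi_n}(\mathbf{s}_{n,k},\pi_n(\mathbf{s}_{n,k}),\mathbf{w}_{n,k})$.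
   Context: Setting (interaction-cost time-adaptive control): $\mathcal{X}\subset\mathbb{R}^{d_x}$, $\mathcal{U}\subset\mathbb{R}^{d_u}$, horizon $T>0$, initial state $\mathbf{x}_0$, $0<t_{\min}\le t_{\max}\le T$. $\Pi_{TC}$ is the set of $L_\pi$-Lipschitz maps $\pi:\mathcal{X}\times[0,T]\to\mathcal{U}\times[0,T]$, $(\mathbf{x},t)\mapsto(\mathbf{u},\tau)$, with duration $\tau=\pi_{\mathcal{T}}(\mathbf{x},t)\in[t_{\min},t_{\max}]$. Augmented state $\mathbf{s}=(\mathbf{x},b,t)$ with $t$ the time to go, $\mathbf{s}_0=(\mathbf{x}_0,0,T)$. For $\Phi:\mathcal{Z}\to\mathbb{R}^{d_x+1}$, $\mathcal{Z}=\mathcal{X}\times\mathcal{U}\times[0,T]$, the transition is $\Psi_\Phi(\mathbf{s}_k,(\mathbf{u}_k,\tau_k),\mathbf{w}_k)=(\Phi(\mathbf{x}_k,\mathbf{u}_k,\tau_k)+\mathbf{w}_k,t_k-\tau_k)$ with zero-mean noise $\mathbf{w}_k$ whose law does not depend on $\Phi$, and $r$ is a fixed reward function; $V_{\pi,\Phi}(\mathbf{x},\tau)$ is the expected sum of rewards over the steps of the episode started at state $\mathbf{x}$ with time to go $\tau$, under policy $\pi$ and dynamics $\Phi$ (steps continue until the durations sum to $\tau$). $\Phi^*$ denotes the true dynamics (mean state and integrated-reward flow of the underlying SDE). Statistical model: $\mathcal{M}_n=\{\Phi:\mathcal{Z}\to\mathbb{R}^{d_x+1}:|\mu_{n,j}(\mathbf{z})-\Phi_j(\mathbf{z})|\le\beta_n(\delta)\sigma_{n,j}(\mathbf{z})\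 \forall\mathbf{z},j\}$ built from data up to episode $n$, with $\beta_n$ increasing in $n$. Optimistic choice: $(\pi_n,\Phi_n)\in\arg\max_{\pi\in\Pi_{TC},\,\Phi\in\mathcal{M}_{n-1}}V_{\pi,\Phi}(\mathbf{x}_0,T)$. $\pi^*\in\arg\max_{\pi\in\Pi_{TC}}V_{\pi,\Phi^*}(\mathbf{x}_0,T)$. *)

From HB Require Import structures.
From mathcomp Require Import all_boot all_order all_algebra.
From mathcomp Require Import all_classical all_reals all_analysis.
Set Implicit Arguments. Unset Strict Implicit. Unset Printing Implicit Defensive.
Import Order.TTheory GRing.Theory Num.Theory.
Import numFieldNormedType.Exports.
Local Open Scope classical_set_scope.
Local Open Scope ring_scope.

(* Conventions:
   - a "state vector" y : 'rV_(dx+1) is (x, b): the first dx coordinates are x,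
     the last one is the integrated reward b;
   - an augmented state s = (y, t) : 'rV_(dx+1) * R, t = time to go;
   - a policy maps (x, t) to (u, tau);
   - a dynamics Phi maps z = (x, u, tau) to 'rV_(dx+1). *)

Section TimeAdaptive.
Context {R : realType} {dx du : nat}.

Definition astate := ('rV[R]_(dx + 1) * R)%type.
Definition action := ('rV[R]_du * R)%type.
Definition zdom := ('rV[R]_dx * 'rV[R]_du * R)%type.
Definition policy := ('rV[R]_dx * R -> action)%type.
Definition dynamics := (zdom -> 'rV[R]_(dx + 1))%type.

Definition xpart (y : 'rV[R]_(dx + 1)) : 'rV[R]_dx := lsubmx y.

Definition yinit (x : 'rV[R]_dx) : 'rV[R]_(dx + 1) := row_mx x 0.

(* the action actually played at s: the duration is truncated to the time to
   go, so that the durations of an episode sum exactly to its horizon.  The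
   lower clip at tmin is a no-op for policies of Pi_TC at states in X; it only
   fixes a convention (durations >= tmin) at states outside X. *)
Definition eff_action (tmin : R) (pi : policy) (s : astate) : action :=
  let a := pi (xpart s.1, s.2) in (a.1, Num.min (Num.max a.2 tmin) s.2).

Definition zof (s : astate) (a : action) : zdom := (xpart s.1, a.1, a.2).

Definition Psi (Phi : dynamics) (s : astate) (a : action)
  (w : 'rV[R]_(dx + 1)) : astate := (Phi (zof s a) + w, s.2 - a.2).

Definition PiTC (X : set 'rV[R]_dx) (U : set 'rV[R]_du) (T tmin tmax Lpi : R)
  (pi : policy) : Prop :=
  (forall x t, X x -> 0 <= t <= T ->
     U (pi (x, t)).1 /\ tmin <= (pi (x, t)).2 <= tmax) /\
  (forall x x' t t', X x -> X x' -> 0 <= t <= T -> 0 <= t' <= T ->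
     Num.max `|(pi (x, t)).1 - (pi (x', t')).1| `|(pi (x, t)).2 - (pi (x', t')).2|
       <= Lpi * Num.max `|x - x'| `|t - t'|).

Definition inModel (X : set 'rV[R]_dx) (U : set 'rV[R]_du) (T : R)
  (mu sigma : dynamics) (beta : R) (Phi : dynamics) : Prop :=
  forall x u tau, X x -> U u -> 0 <= tau <= T ->
    forall j : 'I_(dx + 1),
      `|mu (x, u, tau) 0 j - Phi (x, u, tau) 0 j| <= beta * sigma (x, u, tau) 0 j.

Context {dO : measure_display} {O : measurableType dO}.
Variables (Pw : probability O R) (xi : zdom -> O -> 'rV[R]_(dx + 1)).
(* the noise at a step with input z is w = xi z o, o ~ Pw, drawn afresh at
   each step (independently of the past) *)

Variable tmin : R.

Fixpoint esum_fuel (m : nat) (Phi : dynamics) (pi : policy)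
  (g : astate -> action -> 'rV[R]_(dx + 1) -> R) (s : astate) : R :=
  match m with
  | 0%N => 0
  | m'.+1 =>
      if s.2 <= 0 then 0 else
      let a := eff_action tmin pi s in
      Rintegral Pw setT (fun o =>
        let w := xi (zof s a) o in
        g s a w + esum_fuel m' Phi pi g (Psi Phi s a w))
  end.

(* fuel sufficient for every episode of length <= T: each non-final step lasts
   at least tmin *)
Definition fuel (T : R) : nat := (Num.truncn (T / tmin)).+2.

Variables (r : astate -> action -> R) (T : R).

Definition Val (pi : policy) (Phi : dynamics) (y : 'rV[R]_(dx + 1)) (t : R) : R :=
  esum_fuel (fuel T) Phi pi (fun s a _ => r s a) (y, t).

Definition gapSum (pi : policy) (Phistar Phi' : dynamics) (s0 : astate) : R :=
  esum_fuel (fuel T) Phistar pi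
    (fun s a w =>
       Val pi Phi' (Psi Phi' s a w).1 (Psi Phi' s a w).2
       - Val pi Phi' (Psi Phistar s a w).1 (Psi Phistar s a w).2) s0.

End TimeAdaptive.

From HB Require Import structures.
From mathcomp Require Import all_boot all_order all_algebra.
From mathcomp Require Import all_classical all_reals all_analysis.
Import Order.TTheory GRing.Theory Num.Theory.
Import numFieldNormedType.Exports.
Local Open Scope classical_set_scope.
Local Open Scope ring_scope.

(* On the calibration event, Phistar lies in M_(n-1), so optimism gives
   V(pistar, Phistar) <= V(pi_n, Phi_n).  The remaining difference
   V(pi_n, Phi_n) - V(pi_n, Phistar) is *equal* to the gap sum: by the Bellman
   equation both values are r(s, a) + E[V(next state)] with the same noise
   sample, and adding and subtracting V_(pi_n, Phi_n)(x_(k+1), t_(k+1)) along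
   the true trajectory telescopes.  Every non-final step lasts at least tmin,
   so the fuel of the definitions covers the whole episode and the truncated
   values satisfy the exact Bellman equation. *)

Section Simulation.
Context {R : realType} {dx du : nat}.
Context {dO : measure_display} {O : measurableType dO}.
Variables (Pw : probability O R) (xi : @zdom R dx du -> O -> 'rV[R]_(dx + 1)).
Variable tmin : R.
Hypothesis tmin_gt0 : 0 < tmin.

(* Fuel [m] covers an episode with time to go [t]: each non-final step lasts
   at least [tmin]. *)
Definition enough_fuel (m : nat) (t : R) : Prop := t <= 0 \/ t < m%:R * tmin.

Lemma enough_fuelS {m t} : enough_fuel m t -> enough_fuel m.+1 t.
Proof.
case=> [|lt_t]; [by left | right].
by rewrite (lt_le_trans lt_t) // ler_pM2r // ler_nat.
Qed.

Lemma enough_fuel_le {m t t'} : t <= t' -> enough_fuel m t' -> enough_fuel m t.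
Proof.
move=> le_tt' [?|?]; [left; exact: le_trans le_tt' _ | right].
exact: le_lt_trans le_tt' _.
Qed.

Lemma enough_fuel_trunc T : enough_fuel (Num.truncn (T / tmin)).+1 T.
Proof. by right; rewrite -ltr_pdivrMr // truncnS_gt. Qed.

Variable pi : @policy R dx du.

Lemma duration_ge0 {s : @astate R dx} : 0 < s.2 -> 0 <= (eff_action tmin pi s).2.
Proof.
move=> t_gt0; rewrite /eff_action /= le_min (ltW t_gt0) andbT.
by rewrite le_max (ltW tmin_gt0) orbT.
Qed.

Lemma enough_fuel_next {m} {s : @astate R dx} : 0 < s.2 ->
  enough_fuel m.+1 s.2 -> enough_fuel m (s.2 - (eff_action tmin pi s).2).
Proof.
move=> t_gt0 [t_le0|lt_t]; first by move: (lt_le_trans t_gt0 t_le0); rewrite ltxx.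
rewrite /eff_action /=.
have [le_dt|lt_td] := leP (Num.max (pi (xpart s.1, s.2)).2 tmin) s.2; last first.
  by left; rewrite subrr.
right; rewrite ltrBlDr (lt_le_trans lt_t) //.
by rewrite -addn1 natrD mulrDl mul1r lerD2l le_max lexx orbT.
Qed.

Lemma esum_fuel_enough (Phi : @dynamics R dx du) g m m' (s : @astate R dx) :
  (m <= m')%N -> enough_fuel m s.2 ->
  esum_fuel Pw xi tmin m' Phi pi g s = esum_fuel Pw xi tmin m Phi pi g s.
Proof.
elim: m m' s => [|m IH] [|m'] s //= le_mm' fuel_s.
  by case: fuel_s => [->|]; rewrite // mul0r => /ltW ->.
case: ifP => // /negbT; rewrite -ltNge => t_gt0.
congr (Rintegral _ _ _); apply: funext => o; congr (_ + _).
exact/IH/enough_fuel_next.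
Qed.

Variable rew : @astate R dx -> @action R du -> R.

Definition value_with_fuel (m : nat) (Phi : @dynamics R dx du) (s : @astate R dx)
  : R :=
  esum_fuel Pw xi tmin m Phi pi (fun s a _ => rew s a) s.

Lemma value_bellman {m} {Phi : @dynamics R dx du} {s : @astate R dx} :
  let a := eff_action tmin pi s in
  0 < s.2 -> enough_fuel m.+1 s.2 ->
  Pw.-integrable setT
    (fun o => (value_with_fuel m.+1 Phi (Psi Phi s a (xi (zof s a) o)))%:E) ->
  value_with_fuel m.+1 Phi s = rew s a + Rintegral Pw setT
    (fun o => value_with_fuel m.+1 Phi (Psi Phi s a (xi (zof s a) o))).
Proof.
move=> a t_gt0 fuel_s int_next.
have -> : value_with_fuel m.+1 Phi s =
    Rintegral Pw setT
      (fun o => rew s a + value_with_fuel m Phi (Psi Phi s a (xi (zof s a) o))).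
  by rewrite /value_with_fuel /= leNgt t_gt0.
have fuel_next o : value_with_fuel m Phi (Psi Phi s a (xi (zof s a) o)) =
                   value_with_fuel m.+1 Phi (Psi Phi s a (xi (zof s a) o)).
  rewrite /value_with_fuel (esum_fuel_enough _ _ _ _ _ (leqnSn m)) //.
  exact: enough_fuel_next.
under eq_Rintegral do rewrite fuel_next.
rewrite RintegralD //; last exact: finite_measure_integrable_cst.
rewrite Rintegral_cst // [X in _ * X](_ : _ = 1) ?mulr1 //.
exact: (congr1 fine (probability_setT Pw)).
Qed.

Lemma value_gap_telescope (Phi' Phis : @dynamics R dx du) (m : nat) (T : R) :
  enough_fuel m T ->
  (forall s : @astate R dx, 0 < s.2 <= T ->
    let a := eff_action tmin pi s in
    Pw.-integrable setT
      (fun o => (value_with_fuel m.+1 Phi' (Psi Phi' s a (xi (zof s a) o)))%:E) /\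
    Pw.-integrable setT
      (fun o => (value_with_fuel m.+1 Phis (Psi Phis s a (xi (zof s a) o)))%:E)) ->
  forall k (s : @astate R dx), enough_fuel k s.2 -> s.2 <= T ->
  value_with_fuel m.+1 Phi' s - value_with_fuel m.+1 Phis s =
  esum_fuel Pw xi tmin k Phis pi
    (fun s a w => value_with_fuel m.+1 Phi' (Psi Phi' s a w)
                  - value_with_fuel m.+1 Phi' (Psi Phis s a w)) s.
Proof.
move=> fuel_T integrable_next; elim=> [|k IH] s fuel_s le_tT.
  have t_le0 : s.2 <= 0 by case: fuel_s; rewrite // mul0r => /ltW.
  by rewrite /value_with_fuel /= t_le0 subrr.
have [t_le0|t_gt0] := leP s.2 0; first by rewrite /value_with_fuel /= t_le0 subrr.
have fuel_m1 : enough_fuel m.+1 s.2 by exact: enough_fuelS (enough_fuel_le le_tT fuel_T).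
have [int_model int_true] := integrable_next s (introT andP (conj t_gt0 le_tT)).
rewrite (value_bellman t_gt0 fuel_m1 int_model) (value_bellman t_gt0 fuel_m1 int_true).
rewrite opprD addrACA subrr add0r -RintegralB //= leNgt t_gt0 /=.
congr (Rintegral _ _ _); apply: funext => o.
rewrite -IH /=; first by rewrite addrA subrK.
  exact: enough_fuel_next.
by rewrite (le_trans _ le_tT) // gerBl duration_ge0.
Qed.

End Simulation.

Theorem lemma2 (R : realType) (dx du : nat)
  (X : set 'rV[R]_dx) (U : set 'rV[R]_du) (T tmin tmax Lpi : R)
  (x0 : 'rV[R]_dx)
  (hX0 : X x0) (htmin : 0 < tmin) (htt : tmin <= tmax) (htT : tmax <= T)
  (* noise model: w = xi z o with o ~ Pw, zero mean; its law does not depend on Phi *)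
  (dO : measure_display) (O : measurableType dO) (Pw : probability O R)
  (xi : @zdom R dx du -> O -> 'rV[R]_(dx + 1))
  (hxi : forall z (j : 'I_(dx + 1)),
     Pw.-integrable setT (fun o => (xi z o 0 j)%:E) /\
     Rintegral Pw setT (fun o => xi z o 0 j) = 0)
  (r : @astate R dx -> @action R du -> R)
  (Phistar : @dynamics R dx du)
  (* data: probability space, model parameters built from data *)
  (dD : measure_display) (Om : measurableType dD) (P : probability Om R)
  (delta : R) (hdelta : 0 < delta < 1)
  (mu sigma : nat -> Om -> @dynamics R dx du) (beta : nat -> R)
  (hbeta : forall m n, (m <= n)%N -> beta m <= beta n)
  (* optimal policy on the true dynamics *)
  (pistar : @policy R dx du)
  (hpistar : PiTC X U T tmin tmax Lpi pistar /\
     forall pi, PiTC X U T tmin tmax Lpi pi ->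
       Val Pw xi tmin r T pi Phistar (yinit x0) T
       <= Val Pw xi tmin r T pistar Phistar (yinit x0) T)
  (* optimistic choice (pi_n, Phi_n) in argmax over Pi_TC x M_{n-1} *)
  (pin : nat -> Om -> @policy R dx du) (Phin : nat -> Om -> @dynamics R dx du)
  (hopt : forall n om, (1 <= n)%N ->
     [/\ PiTC X U T tmin tmax Lpi (pin n om),
         inModel X U T (mu n.-1 om) (sigma n.-1 om) (beta n.-1) (Phin n om) &
         forall pi Phi, PiTC X U T tmin tmax Lpi pi ->
           inModel X U T (mu n.-1 om) (sigma n.-1 om) (beta n.-1) Phi ->
           Val Pw xi tmin r T pi Phi (yinit x0) T
           <= Val Pw xi tmin r T (pin n om) (Phin n om) (yinit x0) T])
  (* standing regularity: the expectations involved are well defined *)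
  (hint : forall n om, (1 <= n)%N -> forall s : @astate R dx,
     0 < s.2 <= T ->
     let a := eff_action tmin (pin n om) s in
     let w := xi (zof s a) in
     [/\ Pw.-integrable setT (fun o =>
           (Val Pw xi tmin r T (pin n om) (Phin n om)
              (Psi (Phin n om) s a (w o)).1 (Psi (Phin n om) s a (w o)).2)%:E),
         Pw.-integrable setT (fun o =>
           (Val Pw xi tmin r T (pin n om) (Phin n om)
              (Psi Phistar s a (w o)).1 (Psi Phistar s a (w o)).2)%:E) &
         Pw.-integrable setT (fun o =>
           (Val Pw xi tmin r T (pin n om) Phistar
              (Psi Phistar s a (w o)).1 (Psi Phistar s a (w o)).2)%:E)])
  (* well-calibration: w.p. >= 1 - delta, Phistar lies in every M_n *)
  (hcal : exists A : set Om, [/\ measurable A, ((1 - delta)%:E <= P A)%E &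
     forall om, A om -> forall n,
       inModel X U T (mu n om) (sigma n om) (beta n) Phistar]) :
  exists A : set Om, [/\ measurable A, ((1 - delta)%:E <= P A)%E &
    forall om, A om -> forall n, (1 <= n)%N ->
      Val Pw xi tmin r T pistar Phistar (yinit x0) T
      - Val Pw xi tmin r T (pin n om) Phistar (yinit x0) T
      <= gapSum Pw xi tmin r T (pin n om) Phistar (Phin n om) (yinit x0, T)].
Proof.
case: hcal => A [mA PA calibrated]; exists A; split => // om Aom n n_ge1.
have [_ _ optimistic] := hopt n om n_ge1.
have optimism := optimistic pistar Phistar hpistar.1 (calibrated om Aom n.-1).
have fuel_T := enough_fuel_trunc tmin htmin T.
have integrable_next := fun s s_T =>
  let: And3 int_model _ int_true := hint n om n_ge1 s s_T in conj int_model int_true.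
have gap_eq := value_gap_telescope Pw xi tmin htmin (pin n om) r (Phin n om) Phistar
  _ T fuel_T integrable_next (fuel tmin T) (yinit x0, T)
  (enough_fuelS tmin htmin fuel_T) (lexx T).
by rewrite -[gapSum _ _ _ _ _ _ _ _ _]gap_eq lerD2r.
Qed.
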